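(* Let $q$ be a prime power and let $\mathcal{F}=(\mathcal{F}_1,\ldots,\mathcal{F}_r)$ be a flag on $\mathbb{F}_{q^n}$. Then $$\mathrm{Stab}^+(\mathcal{F})=\mathrm{Stab}(\mathcal{F})\cup\{0\}=\bigcap_{i=1}^r\mathrm{Stab}^+(\mathcal{F}_i),$$ and every subspace $\mathcal{F}_i$ is a vector space over $\mathrm{Stab}^+(\mathcal{F})$. Moreover, if $1\in\mathcal{F}_1$, then $\mathrm{Stab}^+(\mathcal{F})$ is contained in every subspace $\mathcal{F}_i$, $1\le i\le r$.
   Context: $\mathbb{F}_{q^n}$ is regarded as an $\mathbb{F}_q$-vector space. A flag on $\mathbb{F}_{q^n}$ is a sequence $(\mathcal{F}_1,\ldots,\mathcal{F}_r)$ of $\mathbb{F}_q$-subspaces with $\{0\}\subsetneq\mathcal{F}_1\subsetneq\cdots\subsetneq\mathcal{F}_r\subsetneq\mathbb{F}_{q^n}$. For $\gamma\in\mathbb{F}_{q^n}^*$ and an $\mathbb{F}_q$-subspace $\mathcal{U}$, $\mathcal{U}\gamma=\{u\gamma:u\in\mathcal{U}\}$, and $\mathcal{F}\gamma=(\mathcal{F}_1\gamma,\ldots,\mathcal{F}_r\gamma)$. The stabilizers under the full group $\mathbb{F}_{q^n}^*$ are $\mathrm{Stab}(\mathcal{U})=\{\gamma\in\mathbb{F}_{q^n}^*:\mathcal{U}\gamma=\mathcal{U}\}$ and $\mathrm{Stab}(\mathcal{F})=\{\gamma\in\mathbb{F}_{q^n}^*:\mathcal{F}\gamma=\mathcal{F}\}$.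 The stabilizer subfield $\mathrm{Stab}^+(\mathcal{U})$ (resp. $\mathrm{Stab}^+(\mathcal{F})$) is the smallest subfield of $\mathbb{F}_{q^n}$ containing both $\mathbb{F}_q$ and $\mathrm{Stab}(\mathcal{U})$ (resp. $\mathrm{Stab}(\mathcal{F})$). *)

From HB Require Import structures.
From mathcomp Require Import all_boot all_order all_algebra all_field.
Set Implicit Arguments. Unset Strict Implicit. Unset Printing Implicit Defensive.
Import GRing.Theory.
Local Open Scope ring_scope.

(* Setting: F plays the role of F_q (any finite field, so q = #|F| is a prime
   power), L plays the role of F_{q^n} (any finite extension of F, n = \dim L),
   regarded as an F-vector space; F_q-subspaces are {vspace L}. *)

Section StabDefs.
Variables (F : finFieldType) (L : fieldExtType F).

Definition vsmul (U : {vspace L}) (g : L) : {vspace L} := (amulr g @: U)%VS.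

Definition Stab (U : {vspace L}) : pred L :=
  fun g => (g != 0) && (vsmul U g == U).

Definition StabFlag (r : nat) (Fl : 'I_r -> {vspace L}) : pred L :=
  fun g => (g != 0) && [forall i, vsmul (Fl i) g == Fl i].

Definition elems (P : pred L) : seq L :=
  [seq x : L | x <- enum [pred y : finvect_type L | P y]].

(* Stab^+: the smallest subfield of L containing F (i.e. 1%VS) and the given
   set of elements: the F-algebra generated by them (in the finite extension L
   the F-subalgebras are exactly the subfields containing F). *)
Definition StabPlus_of (P : pred L) : {aspace L} := (<< 1%VS & elems P >>)%AS.

Definition StabPlus (U : {vspace L}) : {aspace L} := StabPlus_of (Stab U).

Definition StabPlusFlag (r : nat) (Fl : 'I_r -> {vspace L}) : {aspace L} :=
  StabPlus_of (StabFlag Fl).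

Definition is_flag (r : nat) (Fl : 'I_r -> {vspace L}) : Prop :=
  (forall i : 'I_r, Fl i != 0%VS /\ Fl i != fullv) /\
  (forall i j : 'I_r, (i < j)%N -> (Fl i <= Fl j)%VS /\ Fl i != Fl j).

End StabDefs.

From HB Require Import structures.
From mathcomp Require Import all_boot all_order all_algebra all_field.
Import GRing.Theory.
Local Open Scope ring_scope.

(* For an F-subspace U of L, the multipliers {g | U g <= U} form an
   F-subalgebra of L. Multiplication by g != 0 is injective, so U g <= U
   forces U g = U by dimension: the nonzero multipliers are exactly Stab(U).
   Hence the algebra generated by Stab(U) is the multiplier algebra itself,
   and for a flag it is the intersection of the multiplier algebras of the
   F_i. If 1 is in F_1, every multiplier k of F_1 lies in F_1 as k = 1 k,
   hence in every F_i. *)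

Section Multipliers.
Variables (F : finFieldType) (L : fieldExtType F).

Lemma mem_elems (P : pred L) x : (x \in elems P) = P x.
Proof.
rewrite /elems; apply/mapP/idP => [[y Py ->]|Px]; last exists x => //.
  by move: Py; rewrite (@mem_enum (finvect_type L)).
by rewrite (@mem_enum (finvect_type L)).
Qed.

Section GeneratedAlgebra.
Variable Q : pred L.
Hypotheses (Q1 : Q 1) (QD : forall x y, Q x -> Q y -> Q (x + y)).
Hypotheses (QZ : forall a x, Q x -> Q (a *: x))
  (QM : forall x y, Q x -> Q y -> Q (x * y)).

Lemma memv_span_elems x : (x \in <<elems Q>>%VS) = Q x.
Proof.
apply/idP/idP => [|Qx]; last by rewrite memv_span ?mem_elems.
move/(coord_span (X := in_tuple (elems Q))) => ->.
apply: (big_ind Q) => [||i _]; first by rewrite -(scale0r 1) QZ.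
  exact: QD.
by apply: QZ; rewrite -mem_elems mem_nth.
Qed.

Lemma mem_StabPlus_of (P : pred L) :
  (forall x, P x = (x != 0) && Q x) -> forall x, (x \in StabPlus_of P) = Q x.
Proof.
move=> PE x; apply/idP/idP => [|Qx]; last first.
  have [->|nz] := eqVneq x 0; first exact: mem0v.
  by rewrite seqv_sub_adjoin // mem_elems PE nz.
have gens_sub : (1 + <<elems P>> <= <<elems Q>>)%VS.
  rewrite subv_add -memvE memv_span_elems Q1; apply/span_subvP => y.
  by rewrite mem_elems PE memv_span_elems => /andP[].
have span_mul : (<<elems Q>> * <<elems Q>> <= <<elems Q>>)%VS.
  by apply/prodvP => u v; rewrite !memv_span_elems; apply: QM.
rewrite -memv_span_elems; apply: subvP x; apply: agenv_sub_modl.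
  by rewrite -memvE memv_span_elems.
exact: subv_trans (prodvSl _ gens_sub) span_mul.
Qed.

End GeneratedAlgebra.

Definition multiplier (U : {vspace L}) : pred L :=
  fun g => (vsmul U g <= U)%VS.

Lemma multiplierP (U : {vspace L}) g :
  reflect (forall u, u \in U -> u * g \in U) (multiplier U g).
Proof.
apply: (iffP subvP) => [sUgU u Uu | UgU _ /memv_imgP[u Uu ->]].
  by have := sUgU _ (memv_img (amulr g) Uu); rewrite lfunE.
by rewrite lfunE UgU.
Qed.

Lemma vsmul_eq_multiplier (U : {vspace L}) g :
  g != 0 -> (vsmul U g == U) = multiplier U g.
Proof.
move=> nz; rewrite /multiplier eqEdim; case: (_ <= _)%VS => //=.
have inj_g : lker (amulr g) == 0%VS by rewrite lker0_amulr ?unitfE.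
by rewrite /vsmul limg_dim_eq ?leqnn // (eqP inj_g) capv0.
Qed.

Lemma Stab_multiplier (U : {vspace L}) g :
  Stab U g = (g != 0) && multiplier U g.
Proof.
by rewrite /Stab; have [//|nz] := eqVneq g 0; rewrite vsmul_eq_multiplier.
Qed.

Lemma multiplier0 U : multiplier U 0.
Proof. by apply/multiplierP => u; rewrite mulr0 mem0v. Qed.

Lemma multiplier1 U : multiplier U 1.
Proof. by apply/multiplierP => u; rewrite mulr1. Qed.

Lemma multiplierD U g h :
  multiplier U g -> multiplier U h -> multiplier U (g + h).
Proof.
move=> /multiplierP Ug /multiplierP Uh; apply/multiplierP => u Uu.
by rewrite mulrDr memvD ?Ug ?Uh.
Qed.

Lemma multiplierZ U a g : multiplier U g -> multiplier U (a *: g).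
Proof.
move=> /multiplierP Ug; apply/multiplierP => u Uu.
by rewrite -scalerAr memvZ ?Ug.
Qed.

Lemma multiplierM U g h :
  multiplier U g -> multiplier U h -> multiplier U (g * h).
Proof.
move=> /multiplierP Ug /multiplierP Uh; apply/multiplierP => u Uu.
by rewrite mulrA Uh ?Ug.
Qed.

Lemma mem_StabPlus U g : (g \in StabPlus U) = multiplier U g.
Proof.
apply: (@mem_StabPlus_of (multiplier U)); [exact: multiplier1 |
  exact: multiplierD | exact: multiplierZ | exact: multiplierM |
  exact: Stab_multiplier].
Qed.

Lemma mem_StabPlusFlag r (Fl : 'I_r -> {vspace L}) g :
  (g \in StabPlusFlag Fl) = [forall i, multiplier (Fl i) g].
Proof.
apply: (@mem_StabPlus_of [pred x | [forall i, multiplier (Fl i) x]]) =>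
  [|x y|a x|x y|x].
- by apply/forallP => i; apply: multiplier1.
- by move=> /forallP Fx /forallP Fy; apply/forallP => i; apply: multiplierD.
- by move=> /forallP Fx; apply/forallP => i; apply: multiplierZ.
- by move=> /forallP Fx /forallP Fy; apply/forallP => i; apply: multiplierM.
rewrite /StabFlag; have [//|nz] := eqVneq x 0.
by apply: eq_forallb => i; rewrite vsmul_eq_multiplier.
Qed.

Lemma flag_mono r (Fl : 'I_r -> {vspace L}) (i j : 'I_r) :
  is_flag Fl -> (i <= j)%N -> (Fl i <= Fl j)%VS.
Proof.
move=> [_ flag_lt]; rewrite leq_eqVlt => /orP[/eqP/val_inj-> //|].
by move=> /flag_lt[].
Qed.

End Multipliers.

Theorem proposition3p7 (F : finFieldType) (L : fieldExtType F) (r : nat)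
  (Fl : 'I_r -> {vspace L}) :
  is_flag Fl ->
  [/\ forall x : L, (x \in StabPlusFlag Fl) = (x == 0) || StabFlag Fl x,
      (StabPlusFlag Fl : {vspace L}) =
        (\bigcap_(i < r) (StabPlus (Fl i) : {vspace L}))%VS,
      forall (i : 'I_r) (k u : L),
        k \in StabPlusFlag Fl -> u \in Fl i -> k * u \in Fl i
    & forall i0 : 'I_r, nat_of_ord i0 = 0%N -> 1 \in Fl i0 ->
        forall i : 'I_r, (StabPlusFlag Fl <= Fl i)%VS].
Proof.
move=> flagFl; split.
- move=> x; rewrite mem_StabPlusFlag /StabFlag; have [->|nz] /= := eqVneq x 0.
    by apply/forallP => i; apply: multiplier0.
  by apply: eq_forallb => i; rewrite vsmul_eq_multiplier.
- apply/vspaceP => x; rewrite mem_StabPlusFlag memvE.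
  apply/forallP/subv_bigcapP => [Fx i _|Fx i].
    by rewrite -memvE mem_StabPlus.
  by rewrite -mem_StabPlus memvE Fx.
- move=> i k u; rewrite mem_StabPlusFlag mulrC.
  by move=> /forallP/(_ i)/multiplierP/(_ u).
- move=> i0 i0_0 Fi0_1 i; apply/subvP => k.
  rewrite mem_StabPlusFlag => /forallP/(_ i0)/multiplierP/(_ 1 Fi0_1).
  by rewrite mul1r; apply: subvP; apply: flag_mono; rewrite ?i0_0.
Qed.
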